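(* Let $\kappa<-1$. Let $P_k,P_0\in\bar D$ and $b_k,b_0$ with $\kappa|P_k|<b_k<|P_k|$, $\kappa|P_0|<b_0<|P_0|$, such that $P_k\to P_0$ and $b_k\to b_0$ as $k\to\infty$. If $z_k\in\Gamma(P_k,b_k)$ and $z_k\to z_0$, then $z_0\in\Gamma(P_0,b_0)$, and the normals satisfy $\nu_k(z_k)\to\nu(z_0)$, where $\nu_k(z)=\frac{z}{|z|}-\kappa\frac{P_k-z}{|P_k-z|}$ is the normal to $\Gamma(P_k,b_k)$ at $z$ and $\nu(z)=\frac{z}{|z|}-\kappa\frac{P_0-z}{|P_0-z|}$ the normal to $\Gamma(P_0,b_0)$ at $z$.
   Context: $D\subset\mathbb R^n$ is contained in an $(n-1)$-dimensional hypersurface, with $\bar D$ compact and $0\notin\bar D$. For $P\ne0$ and $\kappa|P|<b<|P|$: $h(x,P,b)=\frac{(\kappa^2x\cdot P-b)-\sqrt{(\kappa^2x\cdot P-b)^2-(\kappa^2-1)(\kappa^2|P|^2-b^2)}}{\kappa^2-1}$, $I(P,b)=\frac{b+\sqrt{(\kappa^2-1)(\kappa^2|P|^2-b^2)}}{\kappa^2|P|}$, and the refracting oval is $\Gamma(P,b)=\{h(x,P,b)x:x\in S^{n-1},\ x\cdot P\ge I(P,b)|P|\}$; its points $z$ satisfy $|z|+\kappa|z-P|=b$. *)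

From HB Require Import structures.
From mathcomp Require Import all_boot all_order all_algebra.
From mathcomp Require Import all_classical all_reals all_analysis.
Set Implicit Arguments. Unset Strict Implicit. Unset Printing Implicit Defensive.
Import Order.TTheory GRing.Theory Num.Theory.
Import numFieldNormedType.Exports.
Local Open Scope ring_scope.
Local Open Scope classical_set_scope.

Definition dotp {R : realType} {n : nat} (x y : 'rV[R]_n) : R :=
  \sum_(i < n) x ord0 i * y ord0 i.

Definition enorm {R : realType} {n : nat} (x : 'rV[R]_n) : R :=
  Num.sqrt (dotp x x).

Definition hfun {R : realType} {n : nat} (kappa : R) (x P : 'rV[R]_n) (b : R) : R :=
  let c := kappa ^+ 2 * dotp x P - b in
  (c - Num.sqrt (c ^+ 2 - (kappa ^+ 2 - 1) * (kappa ^+ 2 * enorm P ^+ 2 - b ^+ 2)))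
  / (kappa ^+ 2 - 1).

Definition Ifun {R : realType} {n : nat} (kappa : R) (P : 'rV[R]_n) (b : R) : R :=
  (b + Num.sqrt ((kappa ^+ 2 - 1) * (kappa ^+ 2 * enorm P ^+ 2 - b ^+ 2)))
  / (kappa ^+ 2 * enorm P).

Definition Gamma {R : realType} {n : nat} (kappa : R) (P : 'rV[R]_n) (b : R)
  : set 'rV[R]_n :=
  [set z | exists x : 'rV[R]_n, enorm x = 1 /\
     Ifun kappa P b * enorm P <= dotp x P /\ z = hfun kappa x P b *: x].

Definition onormal {R : realType} {n : nat} (kappa : R) (P z : 'rV[R]_n) : 'rV[R]_n :=
  (enorm z)^-1 *: z - kappa *: ((enorm (P - z))^-1 *: (P - z)).

From mathcomp Require Import all_boot all_order all_algebra.
From mathcomp Require Import all_classical all_reals all_analysis.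
From mathcomp Require Import ring lra.
Import Order.TTheory GRing.Theory Num.Theory.
Import numFieldNormedType.Exports.
Local Open Scope ring_scope.
Local Open Scope classical_set_scope.

(** For a unit vector x, the oval equation κ²|hx - P|² = (h - b)² along the ray
    through x is the quadratic (κ² - 1)h² - 2(κ² x·P - b)h + κ²|P|² - b² = 0, and
    h(x,P,b) is its smaller root; the cap condition x·P >= I(P,b)|P| says exactly
    that this root is real and positive.  The oval equation passes to the limit,
    and the bounds κ|P0| < b0 < |P0| make it exclude z0 = 0 and z0 = P0.  Hence
    z_k/|z_k| tends to z0/|z0|, continuity of h and I and closedness of the cap
    condition put z0 on Γ(P0,b0), and the normal is continuous away from 0 and P0. *)

Section euclidean.
Context {R : realType} {n : nat}.
Implicit Types (x y z : 'rV[R]_n).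

Lemma dotpC x y : dotp x y = dotp y x.
Proof. by apply: eq_bigr => i _; rewrite mulrC. Qed.

Lemma dotpDl x y z : dotp (x + y) z = dotp x z + dotp y z.
Proof. by rewrite /dotp -big_split; apply: eq_bigr => i _; rewrite mxE mulrDl. Qed.

Lemma dotpZl (a : R) x y : dotp (a *: x) y = a * dotp x y.
Proof. by rewrite /dotp mulr_sumr; apply: eq_bigr => i _; rewrite mxE mulrA. Qed.

Lemma dotpNl x y : dotp (- x) y = - dotp x y.
Proof. by rewrite -scaleN1r dotpZl mulN1r. Qed.

Lemma dotpp_ge0 x : 0 <= dotp x x.
Proof. by apply: sumr_ge0 => i _; rewrite -expr2 sqr_ge0. Qed.

Lemma enorm_ge0 x : 0 <= enorm x.
Proof. exact: sqrtr_ge0. Qed.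

Lemma enorm_sqr x : enorm x ^+ 2 = dotp x x.
Proof. by rewrite sqr_sqrtr ?dotpp_ge0. Qed.

Lemma enormZ (a : R) x : enorm (a *: x) = `|a| * enorm x.
Proof.
by rewrite /enorm dotpZl dotpC dotpZl mulrA -expr2 sqrtrM ?sqr_ge0 // sqrtr_sqr.
Qed.

Lemma enormN x : enorm (- x) = enorm x.
Proof. by rewrite -scaleN1r enormZ normrN1 mul1r. Qed.

Lemma enorm0 : enorm (0 : 'rV[R]_n) = 0.
Proof. by rewrite -(scale0r (0 : 'rV[R]_n)) enormZ normr0 mul0r. Qed.

Lemma enorm_eq0 x : (enorm x == 0) = (x == 0).
Proof.
apply/eqP/eqP => [x0|->]; last exact: enorm0.
have /psumr_eq0P xx0 : dotp x x = 0 by rewrite -enorm_sqr x0 expr0n.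
apply/rowP => i; rewrite mxE.
apply/eqP; rewrite -sqrf_eq0 expr2; apply/eqP/xx0 => // j _.
by rewrite -expr2 sqr_ge0.
Qed.

Lemma enorm_gt0 x : (0 < enorm x) = (x != 0).
Proof. by rewrite lt_def enorm_ge0 enorm_eq0 andbT. Qed.

Lemma enorm_sqrB x y :
  enorm (x - y) ^+ 2 = enorm x ^+ 2 - 2 * dotp x y + enorm y ^+ 2.
Proof.
rewrite !enorm_sqr !dotpDl !dotpNl !(dotpC _ (x - y)) !dotpDl !dotpNl.
by rewrite (dotpC y x); ring.
Qed.

Definition normalize x := (enorm x)^-1 *: x.

Lemma enorm_normalize x : x != 0 -> enorm (normalize x) = 1.
Proof.
by rewrite -enorm_gt0 => x0; rewrite enormZ gtr0_norm ?invr_gt0 // mulVf ?gt_eqF.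
Qed.

Lemma onormalE (k : R) P z : onormal k P z = normalize z - k *: normalize (P - z).
Proof. by []. Qed.

End euclidean.

Lemma quadratic_small_root {R : rcfType} {a q c : R} :
  0 < a -> 0 < q -> Num.sqrt (a * q) <= c ->
  let h := (c - Num.sqrt (c ^+ 2 - a * q)) / a in
  0 < h /\ a * h ^+ 2 - 2 * c * h + q = 0.
Proof.
move=> a0 q0 aq_c /=.
have aq0 : 0 < a * q by rewrite mulr_gt0.
have c0 : 0 < c by apply: lt_le_trans aq_c; rewrite sqrtr_gt0.
have disc_ge0 : 0 <= c ^+ 2 - a * q.
  have := sqr_sqrtr (ltW aq0); have := sqrtr_ge0 (a * q); nra.
set d := Num.sqrt _; set h := (c - d) / a; have d0 : 0 <= d := sqrtr_ge0 _.
have dd : d ^+ 2 = c ^+ 2 - a * q by rewrite sqr_sqrtr.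
have ah : a * h = c - d by rewrite mulrC divfK ?gt_eqF.
split; first by rewrite divr_gt0 // subr_gt0; nra.
apply: (mulfI (lt0r_neq0 a0)); rewrite mulr0.
have -> : a * (a * h ^+ 2 - 2 * c * h + q) = (a * h) ^+ 2 - 2 * c * (a * h) + a * q.
  by ring.
by rewrite ah; nra.
Qed.

Section oval_algebra.
Context {R : realType} {n : nat} {k : R}.
Hypothesis k_lt : k < -1.
Implicit Types (x P : 'rV[R]_n) (p b : R).

Lemma oval_bounds {p b} : k * p < b < p -> 0 < p /\ b ^+ 2 < k ^+ 2 * p ^+ 2.
Proof.
case/andP => kp_b b_p.
have p0 : 0 < p by rewrite ltNge; apply/negP => p_le0; have := k_lt; nra.
have b_kp : b < - (k * p) by have := k_lt; nra.
by split => //; nra.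
Qed.

Lemma Ifun_le_dotpE x P b : k * enorm P < b < enorm P ->
  (Ifun k P b * enorm P <= dotp x P) =
  (Num.sqrt ((k ^+ 2 - 1) * (k ^+ 2 * enorm P ^+ 2 - b ^+ 2)) <= k ^+ 2 * dotp x P - b).
Proof.
move=> /oval_bounds[p0 _]; have k2 : 0 < k ^+ 2 by have := k_lt; nra.
by rewrite /Ifun invfM mulrA divfK ?gt_eqF // ler_pdivrMr // lerBrDl [_ * k ^+ 2]mulrC.
Qed.

Lemma hfun_oval {x P b} : k * enorm P < b < enorm P ->
  enorm x = 1 -> Ifun k P b * enorm P <= dotp x P ->
  0 < hfun k x P b /\
  k ^+ 2 * enorm (hfun k x P b *: x - P) ^+ 2 = (hfun k x P b - b) ^+ 2.
Proof.
move=> kP_b_P x1; rewrite Ifun_le_dotpE //; have /oval_bounds[p0 bp] := kP_b_P.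
have a0 : 0 < k ^+ 2 - 1 by have := k_lt; nra.
have q0 : 0 < k ^+ 2 * enorm P ^+ 2 - b ^+ 2 by rewrite subr_gt0.
move=> /(quadratic_small_root a0 q0) [h0 root]; split => //.
rewrite enorm_sqrB enormZ gtr0_norm // x1 mulr1 dotpZl.
apply/eqP; rewrite -subr_eq0 -root; apply/eqP; rewrite /hfun; ring.
Qed.

End oval_algebra.

Section euclidean_limits.
Context {R : realType} {n : nat} {T : Type} {F : set_system T} {FF : Filter F}.
Implicit Types (u v : T -> 'rV[R]_n) (x y P : 'rV[R]_n) (b : R).

Lemma cvg_dotp {u v x y} : u @ F --> x -> v @ F --> y ->
  dotp (u t) (v t) @[t --> F] --> dotp x y.
Proof.
move=> ux vy; apply: cvg_big => [|i _]; first exact: add_continuous.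
have cv_coord w (c : 'rV[R]_n) : w @ F --> c -> w t ord0 i @[t --> F] --> c ord0 i.
  exact: (continuous_cvg _ (@coord_continuous R 1 n ord0 i c)).
by apply: cvgM; apply: cv_coord.
Qed.

Lemma cvg_enorm {u x} : u @ F --> x -> enorm (u t) @[t --> F] --> enorm x.
Proof.
by move=> ux; apply: (continuous_cvg _ (@sqrt_continuous R _)); exact: cvg_dotp.
Qed.

Lemma cvg_normalize {u x} : x != 0 -> u @ F --> x ->
  normalize (u t) @[t --> F] --> normalize x.
Proof.
rewrite -enorm_gt0 => x0 ux; apply: cvgZ => //.
by apply: cvgV; [rewrite gt_eqF | exact: cvg_enorm].
Qed.

Lemma cvg_sqr (f : T -> R) (c : R) : f @ F --> c -> f t ^+ 2 @[t --> F] --> c ^+ 2.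
Proof. exact: (continuous_cvg _ (@exprn_continuous R 2 c)). Qed.

Lemma cvg_hfun (k : R) u v (c : T -> R) x P b :
  u @ F --> x -> v @ F --> P -> c @ F --> b ->
  hfun k (u t) (v t) (c t) @[t --> F] --> hfun k x P b.
Proof.
move=> ux vP cb; apply: cvgMl.
have cc : k ^+ 2 * dotp (u t) (v t) - c t @[t --> F] --> k ^+ 2 * dotp x P - b.
  by apply: cvgB => //; apply: cvgMr; exact: cvg_dotp.
apply: cvgB => //; apply: (continuous_cvg _ (@sqrt_continuous R _)).
apply: cvgB; first exact: cvg_sqr.
apply: cvgMr; apply: cvgB; last exact: cvg_sqr.
by apply: cvgMr; apply: cvg_sqr; exact: cvg_enorm.
Qed.

Lemma cvg_Ifun (k : R) v (c : T -> R) P b : k != 0 -> P != 0 ->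
  v @ F --> P -> c @ F --> b -> Ifun k (v t) (c t) @[t --> F] --> Ifun k P b.
Proof.
move=> k0 P0 vP cb; apply: cvgM.
  apply: cvgD => //; apply: (continuous_cvg _ (@sqrt_continuous R _)).
  apply: cvgMr; apply: cvgB; last exact: cvg_sqr.
  by apply: cvgMr; apply: cvg_sqr; exact: cvg_enorm.
apply: cvgV; last by apply: cvgMr; exact: cvg_enorm.
by rewrite mulf_neq0 ?expf_neq0 // enorm_eq0.
Qed.

Lemma cvg_onormal (k : R) v u P z : z != 0 -> z != P ->
  v @ F --> P -> u @ F --> z -> onormal k (v t) (u t) @[t --> F] --> onormal k P z.
Proof.
move=> z0 zP vP uz; rewrite onormalE; under eq_fun do rewrite onormalE.
apply: cvgB; first exact: cvg_normalize z0 uz.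
by apply: cvgZr; apply: cvg_normalize; [rewrite subr_eq0 eq_sym | exact: cvgB].
Qed.

End euclidean_limits.

Section refracting_oval.
Context {R : realType} {n : nat} {k : R}.
Hypothesis k_lt : k < -1.
Implicit Types (z P : 'rV[R]_n) (b : R).

Lemma Gamma_polar {P b z} : k * enorm P < b < enorm P -> Gamma k P b z ->
  [/\ 0 < enorm z, Ifun k P b * enorm P <= dotp (normalize z) P,
       enorm z = hfun k (normalize z) P b
     & k ^+ 2 * enorm (z - P) ^+ 2 = (enorm z - b) ^+ 2].
Proof.
move=> kP_b_P [x [x1 [x_I ->]]].
have [h0 oval] := hfun_oval k_lt kP_b_P x1 x_I.
set h := hfun k x P b in h0 oval *.
have hx : enorm (h *: x) = h by rewrite enormZ x1 mulr1 gtr0_norm.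
have -> : normalize (h *: x) = x.
  by rewrite /normalize hx scalerA mulVf ?gt_eqF ?scale1r.
by rewrite hx; split.
Qed.

Lemma Gamma_of_polar P b z : 0 < enorm z ->
  Ifun k P b * enorm P <= dotp (normalize z) P -> enorm z = hfun k (normalize z) P b ->
  Gamma k P b z.
Proof.
move=> z0 z_I zh; exists (normalize z); split; last split => //.
  by rewrite enorm_normalize -?enorm_gt0.
by rewrite -zh /normalize scalerA mulfV ?gt_eqF ?scale1r.
Qed.

Lemma oval_neq {P b z} : k * enorm P < b < enorm P ->
  k ^+ 2 * enorm (z - P) ^+ 2 = (enorm z - b) ^+ 2 -> z != 0 /\ z != P.
Proof.
move=> /[dup] /andP[_ b_P] /(oval_bounds k_lt)[_ bp] oval.
split; apply/eqP => zE; move: oval; rewrite zE.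
  by rewrite sub0r enormN enorm0; nra.
by rewrite subrr enorm0; nra.
Qed.

End refracting_oval.

Section oval_limits.
Context {R : realType} {n : nat} {T : Type} {F : set_system T} {FF : ProperFilter F}.
Context {k : R} {P_ z_ : T -> 'rV[R]_n} {b_ : T -> R} {P z : 'rV[R]_n} {b : R}.
Hypotheses (k_lt : k < -1) (Pb_t : forall t, k * enorm (P_ t) < b_ t < enorm (P_ t)).
Hypotheses (Gamma_t : forall t, Gamma k (P_ t) (b_ t) (z_ t)).
Hypotheses (cvP : P_ @ F --> P) (cvb : b_ @ F --> b) (cvz : z_ @ F --> z).

Let polar t := Gamma_polar k_lt (Pb_t t) (Gamma_t t).

Lemma oval_limit : k ^+ 2 * enorm (z - P) ^+ 2 = (enorm z - b) ^+ 2.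
Proof.
have cv_lhs :
    k ^+ 2 * enorm (z_ t - P_ t) ^+ 2 @[t --> F] --> k ^+ 2 * enorm (z - P) ^+ 2.
  by apply: cvgMr; apply: cvg_sqr; apply: cvg_enorm; exact: cvgB.
have cv_rhs : k ^+ 2 * enorm (z_ t - P_ t) ^+ 2 @[t --> F] --> (enorm z - b) ^+ 2.
  under eq_fun => t do have [_ _ _ ->] := polar t.
  by apply: cvg_sqr; apply: cvgB => //; exact: cvg_enorm.
exact: cvg_unique cv_lhs cv_rhs.
Qed.

Hypothesis Pb : k * enorm P < b < enorm P.

Lemma oval_limit_neq : z != 0 /\ z != P.
Proof. exact: (oval_neq k_lt Pb oval_limit). Qed.

Lemma Gamma_limit : Gamma k P b z.
Proof.
have [z_neq0 _] := oval_limit_neq.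
have k_neq0 : k != 0 by apply: contraTneq k_lt => ->; rewrite ltr0N1.
have P_neq0 : P != 0 by rewrite -enorm_gt0; case/(oval_bounds k_lt): Pb.
have cvx : normalize (z_ t) @[t --> F] --> normalize z.
  exact: cvg_normalize z_neq0 cvz.
apply: Gamma_of_polar; first by rewrite enorm_gt0.
  have cv_gap : dotp (normalize (z_ t)) (P_ t) - Ifun k (P_ t) (b_ t) * enorm (P_ t)
      @[t --> F] --> dotp (normalize z) P - Ifun k P b * enorm P.
    apply: cvgB; first exact: cvg_dotp cvx cvP.
    by apply: cvgM; [exact: cvg_Ifun | exact: cvg_enorm cvP].
  rewrite -subr_ge0; apply: (closed_cvg _ (@closed_ge _ 0) _ _ cv_gap).
  by apply: nearW => t; rewrite /= subr_ge0; have [] := polar t.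
have cv_hfun : enorm (z_ t) @[t --> F] --> hfun k (normalize z) P b.
  under eq_fun => t do have [_ _ -> _] := polar t.
  exact: cvg_hfun.
exact: cvg_unique (cvg_enorm cvz) cv_hfun.
Qed.

End oval_limits.

Theorem lemma3p7 (R : realType) (n : nat) (D : set 'rV[R]_n) (kappa : R)
  (P_ : nat -> 'rV[R]_n) (P0 : 'rV[R]_n) (b_ : nat -> R) (b0 : R)
  (z_ : nat -> 'rV[R]_n) (z0 : 'rV[R]_n) :
  compact (closure D) -> ~ closure D 0 ->
  kappa < -1 ->
  (forall k, closure D (P_ k)) -> closure D P0 ->
  (forall k, kappa * enorm (P_ k) < b_ k < enorm (P_ k)) ->
  kappa * enorm P0 < b0 < enorm P0 ->
  P_ @ \oo --> P0 -> b_ @ \oo --> b0 ->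
  (forall k, Gamma kappa (P_ k) (b_ k) (z_ k)) ->
  z_ @ \oo --> z0 ->
  Gamma kappa P0 b0 z0 /\
  (fun k => onormal kappa (P_ k) (z_ k)) @ \oo --> onormal kappa P0 z0.
Proof.
move=> _ _ k_lt _ _ Pb_k Pb0 cvP cvb Gk cvz.
have [z0_neq0 z0_neqP0] := oval_limit_neq k_lt Pb_k Gk cvP cvb cvz Pb0.
split; first exact: Gamma_limit k_lt Pb_k Gk cvP cvb cvz Pb0.
exact: cvg_onormal.
Qed.
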